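(* (1) Let $C$ be a binary Euclidean LCD $[n,k]$ code with generator matrix $G$, let $\mathbf{x}\in C^{\perp_E}$, and let $C'$ be the binary linear code with generator matrix $G'=\begin{pmatrix}1&\mathbf{x}\\ \mathbf{0}&G\end{pmatrix}$. If $wt(\mathbf{x})$ is even, then $C'$ is a binary Euclidean LCD $[n+1,k+1]$ code. (2) Let $C$ be a ternary Euclidean LCD $[n,k]$ code with generator matrix $G$, let $\mathbf{x}\in C^{\perp_E}$, and let $C'$ be the ternary linear code with generator matrix $G'=\begin{pmatrix}1&\mathbf{x}\\ \mathbf{0}&G\end{pmatrix}$. If $wt(\mathbf{x})\not\equiv 2 \pmod 3$, then $C'$ is a ternary Euclidean LCD $[n+1,k+1]$ code. (3) Let $C$ be a quaternary Hermitian LCD $[n,k]$ code with generator matrix $G$, let $\mathbf{x}\in C^{\perp_H}$, and let $C'$ be the quaternary linear code with generator matrix $G'=\begin{pmatrix}1&\mathbf{x}\\ \mathbf{0}&G\end{pmatrix}$. If $wt(\mathbf{x})$ is even, then $C'$ is a quaternary Hermitian LCD $[n+1,k+1]$ code.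
   Context: Binary, ternary, quaternary codes are linear codes over $\mathbb{F}_2,\mathbb{F}_3,\mathbb{F}_4$. An $[n,k]$ code is a $k$-dimensional subspace of $\mathbb{F}_q^n$; a generator matrix is a $k\times n$ matrix whose rows form a basis. $wt(\mathbf{x})$ is the Hamming weight (number of nonzero coordinates). Euclidean inner product $\langle x,y\rangle_E=\sum x_iy_i$ with dual $C^{\perp_E}$; on $\mathbb{F}_4^n$ the Hermitian inner product is $\langle x,y\rangle_H=\sum x_iy_i^2$ with dual $C^{\perp_H}$. A code is (Euclidean/Hermitian) LCD if $C\cap C^{\perp}=\{0\}$. In $G'$, $\mathbf{0}$ denotes the zero column of length $k$. *)

From HB Require Import structures.
From mathcomp Require Import all_boot all_order all_algebra all_field.
Set Implicit Arguments. Unset Strict Implicit. Unset Printing Implicit Defensive.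
Import GRing.Theory.
Local Open Scope ring_scope.

(* A linear [n,k] code over F is given by a generator matrix G : 'M_(k,n)
   whose rows form a basis (row_free G); the code is the row space of G,
   and a codeword c is a row vector with (c <= G)%MS. *)

Definition wt (F : fieldType) n (x : 'rV[F]_n) : nat :=
  #|[set i : 'I_n | x 0 i != 0]|.

Definition ipE (F : fieldType) n (x y : 'rV[F]_n) : F := \sum_i x 0 i * y 0 i.

(* Hermitian inner product  <x,y>_H = sum x_i y_i^2  (intended for F_4) *)
Definition ipH (F : fieldType) n (x y : 'rV[F]_n) : F :=
  \sum_i x 0 i * (y 0 i) ^+ 2.

Definition in_dualE (F : fieldType) k n (G : 'M[F]_(k, n)) (y : 'rV[F]_n) :=
  forall c : 'rV[F]_n, (c <= G)%MS -> ipE c y = 0.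
Definition in_dualH (F : fieldType) k n (G : 'M[F]_(k, n)) (y : 'rV[F]_n) :=
  forall c : 'rV[F]_n, (c <= G)%MS -> ipH c y = 0.

Definition LCD_E (F : fieldType) k n (G : 'M[F]_(k, n)) :=
  forall v : 'rV[F]_n, (v <= G)%MS -> in_dualE G v -> v = 0.
Definition LCD_H (F : fieldType) k n (G : 'M[F]_(k, n)) :=
  forall v : 'rV[F]_n, (v <= G)%MS -> in_dualH G v -> v = 0.

Definition ext_gen (F : fieldType) k n (G : 'M[F]_(k, n)) (x : 'rV[F]_n)
  : 'M[F]_(1 + k, 1 + n) :=
  block_mx (1%:M : 'M[F]_1) x (0 : 'M[F]_(k, 1)) G.

From HB Require Import structures.
From mathcomp Require Import all_boot all_order all_algebra all_field.
Set Implicit Arguments. Unset Strict Implicit. Unset Printing Implicit Defensive.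
Import GRing.Theory.
Local Open Scope ring_scope.

(* A codeword of C' orthogonal to C' is (a, a x + u) with u in C. Pairing it
   with (1, x) gives a (1 + <x,x>), because x is orthogonal to C. Since every
   nonzero y in F_q satisfies y^(q-1) = 1, <x,x> = wt x in each of the three
   cases, and the weight condition makes 1 + wt x nonzero, so a = 0. Pairing
   with (0, c) then shows u is orthogonal to C, so u = 0 as C is LCD. In the
   Hermitian case this also uses <u,x>_H = <x,u>_H^2, which holds because
   y |-> y^2 is an involutive automorphism of F_4. *)

Section ExtendedCode.

Variable F : fieldType.

Lemma submx_ext_genP k n (G : 'M[F]_(k, n)) x (v : 'rV_(1 + n)) :
  reflect (exists a u, (u <= G)%MS /\ v = row_mx a%:M (a *: x + u))
          (v <= ext_gen G x)%MS.
Proof.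
apply: (iffP submxP) => [[w ->] | [a [u [/submxP[b ->] ->]]]].
  rewrite -[w]hsubmxK /ext_gen mul_row_block mulmx0 addr0 mulmx1.
  exists (lsubmx w 0 0), (rsubmx w *m G); split; first exact: submxMl.
  by rewrite -mul_scalar_mx -mx11_scalar.
exists (row_mx a%:M b).
by rewrite /ext_gen mul_row_block mulmx0 addr0 mulmx1 mul_scalar_mx.
Qed.

Lemma row_mx1_submx_ext_gen k n (G : 'M[F]_(k, n)) x :
  (row_mx 1%:M x <= ext_gen G x)%MS.
Proof. by apply/submx_ext_genP; exists 1, 0; rewrite sub0mx scale1r addr0. Qed.

Lemma row_mx0_submx_ext_gen k n (G : 'M[F]_(k, n)) x (c : 'rV_n) :
  (c <= G)%MS -> (row_mx 0 c <= ext_gen G x)%MS.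
Proof.
by move=> cG; apply/submx_ext_genP; exists 0, c; rewrite scale0r add0r raddf0.
Qed.

Lemma row_free_ext_gen k n (G : 'M[F]_(k, n)) x :
  row_free G -> row_free (ext_gen G x).
Proof.
move=> freeG; apply/row_freeP.
exists (block_mx 1%:M (- x *m pinvmx G) 0 (pinvmx G)).
rewrite /ext_gen mulmx_block !mulmx1 !mul0mx !mulmx0 !addr0 add0r.
by rewrite mul1mx mulNmx addNr (mulmxVp freeG) -scalar_mx_block.
Qed.

Lemma ipE_row_mx n (p r : 'rV[F]_1) (q s : 'rV[F]_n) :
  ipE (row_mx p q) (row_mx r s) = p 0 0 * r 0 0 + ipE q s.
Proof.
rewrite /ipE big_split_ord big_ord1 /= !row_mxEl.
by congr (_ + _); apply: eq_bigr => i _; rewrite !row_mxEr.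
Qed.

Lemma ipH_row_mx n (p r : 'rV[F]_1) (q s : 'rV[F]_n) :
  ipH (row_mx p q) (row_mx r s) = p 0 0 * r 0 0 ^+ 2 + ipH q s.
Proof.
rewrite /ipH big_split_ord big_ord1 /= !row_mxEl.
by congr (_ + _); apply: eq_bigr => i _; rewrite !row_mxEr.
Qed.

Lemma ipEC n (c u : 'rV[F]_n) : ipE c u = ipE u c.
Proof. by apply: eq_bigr => i _; rewrite mulrC. Qed.

Lemma ipE_linr n (c x u : 'rV[F]_n) a :
  ipE c (a *: x + u) = a * ipE c x + ipE c u.
Proof.
rewrite /ipE mulr_sumr -big_split; apply: eq_bigr => i _.
by rewrite !mxE mulrDr mulrCA.
Qed.

Lemma LCD_E_ext_gen k n (G : 'M[F]_(k, n)) x :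
  LCD_E G -> in_dualE G x -> 1 + ipE x x != 0 -> LCD_E (ext_gen G x).
Proof.
move=> lcdG dualx nz v /submx_ext_genP[a [u [uG ->]]] dualv.
have /eqP : a * (1 + ipE x x) = 0.
  have := dualv _ (row_mx1_submx_ext_gen G x).
  rewrite ipE_row_mx ipE_linr [ipE x u]ipEC (dualx _ uG) !mxE /=.
  by rewrite mul1r addr0 mulrDr mulr1.
rewrite mulf_eq0 (negPf nz) orbF => /eqP a0.
have -> : u = 0.
  apply: lcdG => // c cG; have := dualv _ (row_mx0_submx_ext_gen x cG).
  by rewrite a0 scale0r add0r ipE_row_mx mxE mul0r add0r.
by rewrite a0 scale0r addr0 raddf0 row_mx0.
Qed.

End ExtendedCode.

Section Hermitian.

Variable F : fieldType.
Hypothesis pchar2 : 2%N \in [pchar F].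
Hypothesis frobenius_invol : forall y : F, y ^+ 4 = y.

Lemma ipHC n (c u : 'rV[F]_n) : ipH u c = ipH c u ^+ 2.
Proof.
rewrite -(pFrobenius_autE pchar2) rmorph_sum; apply: eq_bigr => i _.
by rewrite rmorphM /= !pFrobenius_autE -exprM frobenius_invol mulrC.
Qed.

Lemma ipH_linr n (c x u : 'rV[F]_n) a :
  ipH c (a *: x + u) = a ^+ 2 * ipH c x + ipH c u.
Proof.
rewrite /ipH mulr_sumr -big_split; apply: eq_bigr => i _.
rewrite !mxE -!(pFrobenius_autE pchar2) rmorphD rmorphM /=.
by rewrite mulrDr mulrCA.
Qed.

Lemma LCD_H_ext_gen k n (G : 'M[F]_(k, n)) x :
  LCD_H G -> in_dualH G x -> 1 + ipH x x != 0 -> LCD_H (ext_gen G x).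
Proof.
move=> lcdG dualx nz v /submx_ext_genP[a [u [uG ->]]] dualv.
have /eqP : a ^+ 2 * (1 + ipH x x) = 0.
  have := dualv _ (row_mx1_submx_ext_gen G x).
  rewrite ipH_row_mx ipH_linr [ipH x u]ipHC (dualx _ uG) !mxE /=.
  by rewrite expr0n mul1r addr0 mulrDr mulr1.
rewrite mulf_eq0 (negPf nz) orbF expf_eq0 /= => /eqP a0.
have -> : u = 0.
  apply: lcdG => // c cG; have := dualv _ (row_mx0_submx_ext_gen x cG).
  by rewrite a0 scale0r add0r ipH_row_mx mxE mul0r add0r.
by rewrite a0 scale0r addr0 raddf0 row_mx0.
Qed.

End Hermitian.

Lemma expf_card_pred (F : finFieldType) (y : F) : y != 0 -> y ^+ #|F|.-1 = 1.
Proof.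
move=> y0; apply: (mulfI y0); rewrite mulr1 -exprS prednK ?expf_card //.
by apply/card_gt0P; exists 0.
Qed.

Lemma sum_expr_wt (F : finFieldType) n (x : 'rV[F]_n) m :
  (0 < m)%N -> (#|F|.-1 %| m)%N -> \sum_i x 0 i ^+ m = (wt x)%:R.
Proof.
move=> m_gt0 /dvdnP[d def_m].
rewrite /wt -sum1_card natr_sum [RHS]big_mkcond /=.
apply: eq_bigr => i _; rewrite inE.
have [-> | xi0] := eqVneq (x 0 i) 0; first by rewrite expr0n eqn0Ngt m_gt0.
by rewrite def_m mulnC exprM expf_card_pred // expr1n.
Qed.

Lemma ipE_self_wt (F : finFieldType) n (x : 'rV[F]_n) :
  (#|F|.-1 %| 2)%N -> ipE x x = (wt x)%:R.
Proof.
by move=> dv2; rewrite -(sum_expr_wt _ (m := 2)).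
Qed.

Lemma ipH_self_wt (F : finFieldType) n (x : 'rV[F]_n) :
  (#|F|.-1 %| 3)%N -> ipH x x = (wt x)%:R.
Proof.
by move=> dv3; rewrite -(sum_expr_wt _ (m := 3)).
Qed.

Lemma pchar_natr1_neq0 (R : nzRingType) p m :
  p \in [pchar R] -> (m %% p != p.-1)%N -> 1 + m%:R != 0 :> R.
Proof.
move=> charRp; rewrite nat1r -(dvdn_pcharf charRp); apply: contra => dvd_p.
have p_gt1 := prime_gt1 (pcharf_prime charRp).
by rewrite -[m]/(m.+1.-1) modn_pred ?dvd_p // gtn_eqF.
Qed.

Theorem theorem3p5 :
  (* (1) binary, Euclidean *)
  (forall (n k : nat) (G : 'M['F_2]_(k, n)) (x : 'rV['F_2]_n),
      row_free G -> LCD_E G -> in_dualE G x -> ~~ odd (wt x) ->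
      row_free (ext_gen G x) /\ LCD_E (ext_gen G x)) /\
  (* (2) ternary, Euclidean *)
  (forall (n k : nat) (G : 'M['F_3]_(k, n)) (x : 'rV['F_3]_n),
      row_free G -> LCD_E G -> in_dualE G x -> (wt x %% 3 != 2)%N ->
      row_free (ext_gen G x) /\ LCD_E (ext_gen G x)) /\
  (* (3) quaternary, Hermitian: F is the field with 4 elements *)
  (forall (F : finFieldType), #|F| = 4%N ->
    forall (n k : nat) (G : 'M[F]_(k, n)) (x : 'rV[F]_n),
      row_free G -> LCD_H G -> in_dualH G x -> ~~ odd (wt x) ->
      row_free (ext_gen G x) /\ LCD_H (ext_gen G x)).
Proof.
split; [|split].
- move=> n k G x freeG lcdG dualx even_wt; split; first exact: row_free_ext_gen.
  apply: LCD_E_ext_gen; rewrite // ipE_self_wt ?card_Fp //.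
  apply: (pchar_natr1_neq0 (pchar_Fp (isT : prime 2))).
  by rewrite modn2 (negbTE even_wt).
- move=> n k G x freeG lcdG dualx wt_mod3; split; first exact: row_free_ext_gen.
  apply: LCD_E_ext_gen; rewrite // ipE_self_wt ?card_Fp //.
  exact: (pchar_natr1_neq0 (pchar_Fp (isT : prime 3))).
- move=> F cardF n k G x freeG lcdG dualx even_wt.
  split; first exact: row_free_ext_gen.
  have pchar2 : 2%N \in [pchar F].
    by apply/(@card_finPcharP _ _ 2%N); rewrite ?cardF.
  apply: (LCD_H_ext_gen pchar2); rewrite // ?ipH_self_wt ?cardF //.
    by move=> y; rewrite -{1}cardF expf_card.
  by apply: (pchar_natr1_neq0 pchar2); rewrite modn2 (negbTE even_wt).
Qed.
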